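(* Let $f\in\mathcal{F}_{1,1}$ and let $t,T$ be positive integers. There exists a function $\widetilde f:[0,1]\to\mathbb{R}$ such that: (i) $\widetilde f$ is continuous and Lipschitz with constant $1$; (ii) $\widetilde f(\frac iT)=\left\lceil Tf(\frac iT)/2^{-t}\right\rceil\frac{2^{-t}}{T}$ for $i=0,1,\dots,T$; (iii) $|\widetilde f(x)-f(x)|<\frac{2^{-t}}{T}$ for all $x\in[0,1]$.
   Context: $\mathcal{F}_{1,1}$ is the set of functions $f\in\mathscr{W}^{1,\infty}([0,1])$ (identified with their continuous representatives) with $\operatorname{ess\,sup}|f|\le1$ and $\operatorname{ess\,sup}|f'|\le1$. *)

From HB Require Import structures.
From mathcomp Require Import all_boot all_order all_algebra.
From mathcomp Require Import all_classical all_reals all_analysis.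
Set Implicit Arguments. Unset Strict Implicit. Unset Printing Implicit Defensive.
Import Order.TTheory GRing.Theory Num.Theory.
Import numFieldNormedType.Exports.
Local Open Scope classical_set_scope.
Local Open Scope ring_scope.

(* A function on [0,1] is represented by a total function R -> R of which only
   the values on [0,1] matter. *)

Definition lipschitz01 {R : realType} (L : R) (g : R -> R) : Prop :=
  forall x y : R, x \in `[0, 1] -> y \in `[0, 1] -> `|g x - g y| <= L * `|x - y|.

(* F_{1,1}: (continuous representatives of) W^{1,oo}([0,1]) functions with
   ess sup |f| <= 1 and ess sup |f'| <= 1.  For the continuous representative
   on an interval this is: |f| <= 1 on [0,1] and f is 1-Lipschitz on [0,1]. *)
Definition F11 {R : realType} (f : R -> R) : Prop :=
  (forall x : R, x \in `[0, 1] -> `|f x| <= 1) /\ lipschitz01 1 f.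

From HB Require Import structures.
From mathcomp Require Import all_boot all_order all_algebra.
From mathcomp Require Import all_classical all_reals all_analysis.
From mathcomp Require Import ring lra.
Import Order.TTheory GRing.Theory Num.Theory.
Import numFieldNormedType.Exports.
Local Open Scope classical_set_scope.
Local Open Scope ring_scope.

(* Round the values of f at the grid points i/T up to the lattice
   d Z, d = 2^-t / T.  The grid spacing 1/T is a multiple of d, so rounding up
   keeps the values v_i compatible with slope 1: v_j <= v_i + |i/T - j/T|.
   The function max (f, max_i (v_i - |x - i/T|)) is then 1-Lipschitz as a
   maximum of 1-Lipschitz functions, equals v_i at i/T because f(i/T) <= v_i,
   and lies in [f, f + d) because v_i < f(i/T) + d.  To have a 1-Lipschitz
   function on the whole line, f is precomposed with the projection onto
   [0, 1]. *)

Lemma klipschitz_continuous (K : realFieldType) (V W : normedModType K)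
    (k : K) (f : V -> W) :
  k.-lipschitz f -> continuous f.
Proof.
move=> f_lip x; apply/cvgrPdist_lt => e e_gt0.
have k_le : k <= `|k| + 1 by rewrite (le_trans (ler_norm k)) ?lerDl.
have k1_gt0 : 0 < `|k| + 1 by rewrite ltr_pwDr.
near=> y; apply: (le_lt_trans (f_lip (x, y) (conj I I))).
rewrite (le_lt_trans (ler_wpM2r _ k_le)) // -ltr_pdivlMl //; near: y.
by apply: cvgr_dist_lt => //; rewrite mulr_gt0 ?invr_gt0.
Unshelve. all: by end_near.
Qed.

Section OneLipschitz.
Context {R : realType}.
Implicit Types (g : R -> R) (x y : R).

Lemma one_lipschitzP g :
  1.-lipschitz g <-> (forall x y, g x <= g y + `|x - y|).
Proof.
split=> [g_lip x y | g_le [x y] _].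
  have := g_lip (x, y) (conj I I); rewrite /= mul1r => /ler_normlP[_].
  by rewrite lerBlDl.
have := g_le x y; have := g_le y x; rewrite /= mul1r distrC ler_norml.
by move=> ? ?; apply/andP; split; lra.
Qed.

Lemma one_lipschitz_dist g x y : 1.-lipschitz g -> `|g x - g y| <= `|x - y|.
Proof. by move=> /(_ (x, y) (conj I I)); rewrite /= mul1r. Qed.

Lemma one_lipschitz_bigmax (I : Type) (r : seq I) (P : pred I)
    (g : R -> R) (F : I -> R -> R) :
  1.-lipschitz g -> (forall i, P i -> 1.-lipschitz (F i)) ->
  1.-lipschitz (fun x => \big[Num.max/g x]_(i <- r | P i) F i x).
Proof.
move=> /one_lipschitzP g_lip F_lip; apply/one_lipschitzP => x y.
apply: (big_ind2 (fun b c => b <= c + `|x - y|)) => [|b1 c1 b2 c2 *|i Pi].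
- exact: g_lip.
- by rewrite addr_maxl le_max2.
- by move/one_lipschitzP: (F_lip i Pi).
Qed.

Lemma one_lipschitz_cone (c a : R) : 1.-lipschitz (fun x => c - `|x - a|).
Proof.
apply/one_lipschitzP => x y; have := ler_distD x y a.
by rewrite (distrC y x); lra.
Qed.

Definition clamp01 x : R := Num.max 0 (Num.min x 1).

Lemma clamp01_in x : clamp01 x \in `[0, 1].
Proof. by rewrite in_itv /= le_max lexx ge_max ler01 ge_min lexx orbT. Qed.

Lemma clamp01_id x : x \in `[0, 1] -> clamp01 x = x.
Proof.
by rewrite in_itv /= => /andP[x_ge0 x_le1]; rewrite /clamp01 min_l ?max_r.
Qed.

Lemma one_lipschitz_clamp01 : 1.-lipschitz clamp01.
Proof.
apply/one_lipschitzP => x y.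
rewrite /clamp01 addr_maxl le_max2 ?addr_minl ?le_min2 ?lerDl //.
by rewrite -lerBlDl ler_norm.
Qed.

Lemma lipschitz01_clamp01 (f : R -> R) :
  lipschitz01 1 f -> 1.-lipschitz (f \o clamp01).
Proof.
move=> f_lip [x y] _ /=; rewrite !mul1r.
apply: le_trans (f_lip _ _ (clamp01_in x) (clamp01_in y)) _.
by rewrite mul1r; apply/one_lipschitz_dist/one_lipschitz_clamp01.
Qed.

End OneLipschitz.

Section ConeEnvelope.
Context {R : realType} {I : finType}.
Variables (a v : I -> R) (g : R -> R).

Definition cone_envelope x := \big[Num.max/g x]_i (v i - `|x - a i|).

Lemma one_lipschitz_cone_envelope :
  1.-lipschitz g -> 1.-lipschitz cone_envelope.
Proof.
move=> g_lip; apply: one_lipschitz_bigmax => // i _.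
exact: one_lipschitz_cone.
Qed.

Lemma cone_envelope_at i :
  g (a i) <= v i -> (forall j, v j <= v i + `|a i - a j|) ->
  cone_envelope (a i) = v i.
Proof.
move=> gv v_le; apply/le_anti/andP; split.
  by apply: bigmax_le => // j _; rewrite lerBlDr v_le.
by apply: (bigmax_sup i) => //; rewrite subrr normr0 subr0.
Qed.

Lemma cone_envelope_approx (e x : R) :
  1.-lipschitz g -> 0 < e -> (forall i, v i < g (a i) + e) ->
  `|cone_envelope x - g x| < e.
Proof.
move=> /one_lipschitzP g_lip e_gt0 v_lt.
rewrite ger0_norm ?subr_ge0 ?bigmax_ge_id // ltrBlDl.
apply: bigmax_lt => [|i _]; first by rewrite ltrDl.
by have := v_lt i; have := g_lip (a i) x; rewrite distrC; lra.
Qed.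

End ConeEnvelope.

Section RoundUp.
Context {R : realType}.
Variable d : R.
Hypothesis d_gt0 : 0 < d.

Definition round_up (y : R) : R := (Num.ceil (y / d))%:~R * d.

Lemma round_up_ge y : y <= round_up y.
Proof. by rewrite /round_up -ler_pdivrMr // ceil_ge. Qed.

Lemma round_up_ltD y : round_up y < y + d.
Proof.
have := ceilB1_lt (y / d); rewrite rmorphB /= rmorph1 ltrBlDr.
by rewrite /round_up -ltr_pdivlMr // mulrDl divff ?gt_eqF.
Qed.

Lemma round_up_leD (y z : R) (k : int) :
  y <= z + k%:~R * d -> round_up y <= round_up z + k%:~R * d.
Proof.
move=> yz; rewrite /round_up -mulrDl ler_pM2r // -rmorphD ler_int ceil_le_int.
rewrite rmorphD /= (le_trans _ (lerD (ceil_ge (z / d)) (lexx k%:~R))) //.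
by rewrite ler_pdivrMr // mulrDl divfK ?gt_eqF.
Qed.

End RoundUp.

Lemma grid_in01 (R : realType) (i T : nat) :
  (0 < T)%N -> (i <= T)%N -> i%:R / T%:R \in `[0, 1 : R].
Proof.
move=> T_gt0 iT; rewrite in_itv /= divr_ge0 ?ler0n //.
by rewrite ler_pdivrMr ?ltr0n // mul1r ler_nat.
Qed.

Lemma grid_dist (R : realType) (t i j : nat) {T : nat} : (0 < T)%N ->
  `|i%:R / T%:R - j%:R / T%:R| =
  (`|i%:Z - j%:Z| * 2 ^+ t)%:~R * (2 ^- t / T%:R) :> R.
Proof.
move=> T_gt0; rewrite -mulrBl normrM [`|_^-1|]gtr0_norm ?invr_gt0 ?ltr0n //.
rewrite rmorphM /= intr_norm rmorphB /= rmorphXn /= -!pmulrn.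
by field; rewrite gt_eqF ?ltr0n // expf_neq0.
Qed.

Theorem proposition4 (R : realType) (f : R -> R) (t T : nat) :
  F11 f -> (0 < t)%N -> (0 < T)%N ->
  exists ft : R -> R,
    [/\ {within `[0, 1], continuous ft} /\ lipschitz01 1 ft,
        (forall i : nat, (i <= T)%N ->
           ft (i%:R / T%:R) =
           (Num.ceil (T%:R * f (i%:R / T%:R) / (2 ^- t)))%:~R * ((2 ^- t) / T%:R))
      & (forall x : R, x \in `[0, 1] -> `|ft x - f x| < (2 ^- t) / T%:R)].
Proof.
move=> [_ f_lip] _ T_gt0.
set d : R := 2 ^- t / T%:R.
have d_gt0 : 0 < d by rewrite divr_gt0 ?invr_gt0 ?exprn_gt0 ?ltr0n.
pose a (i : 'I_T.+1) : R := i%:R / T%:R.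
pose g := f \o clamp01.
have g_lip : 1.-lipschitz g by exact: lipschitz01_clamp01.
have g_id x : x \in `[0, 1] -> g x = f x by move=> x01; rewrite /g /= clamp01_id.
pose v i := round_up d (g (a i)).
have v_compat (i j : 'I_T.+1) : v j <= v i + `|a i - a j|.
  have a_ij := grid_dist R t i j T_gt0.
  by rewrite /a a_ij round_up_leD // -a_ij distrC; move/one_lipschitzP: g_lip.
exists (cone_envelope a v g); split.
- have ft_lip : 1.-lipschitz (cone_envelope a v g).
    exact: one_lipschitz_cone_envelope.
  split; first exact/continuous_subspaceT/klipschitz_continuous/ft_lip.
  by move=> x y _ _; rewrite mul1r one_lipschitz_dist.
- move=> i iT; pose i' : 'I_T.+1 := Ordinal (iT : (i < T.+1)%N).
  have -> : T%:R * f (i%:R / T%:R) / 2 ^- t = g (a i') / d.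
    by rewrite g_id ?grid_in01 // /d; field; rewrite gt_eqF ?ltr0n //= expf_neq0.
  by rewrite -[i%:R / T%:R]/(a i') cone_envelope_at // round_up_ge.
- move=> x x01; rewrite -g_id //; apply: cone_envelope_approx => // i.
  exact: round_up_ltD.
Qed.
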